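(* Let $\mathcal{C}$ be a category, $J$ a directed partially ordered set, and $\boldsymbol{f}\in(pro^J$-$\mathcal{C})(\boldsymbol{X},\boldsymbol{Y})$. Then there exist inverse systems $\boldsymbol{X}'$ and $\boldsymbol{Y}'$ in $\mathcal{C}$ indexed by the same cofinite directed set $(N,\le)$, a morphism $\boldsymbol{f}':\boldsymbol{X}'\to\boldsymbol{Y}'$ of $pro^J$-$\mathcal{C}$ having a level representative $(1_N,f'^j_\nu)$, and isomorphisms $\boldsymbol{i}:\boldsymbol{X}\to\boldsymbol{X}'$, $\boldsymbol{j}:\boldsymbol{Y}\to\boldsymbol{Y}'$ of $pro^J$-$\mathcal{C}$ such that $\boldsymbol{j}\boldsymbol{f}=\boldsymbol{f}'\boldsymbol{i}$.
   Context: An inverse system $\boldsymbol{X}=(X_\lambda,p_{\lambda\lambda'},\Lambda)$ in $\mathcal{C}$: $\Lambda$ directed preordered, morphisms $p_{\lambda\lambda'}:X_{\lambda'}\to X_\lambda$ for $\lambda\le\lambda'$, $p_{\lambda\lambda}=1$, $p_{\lambda\lambda'}p_{\lambda'\lambda''}=p_{\lambda\lambda''}$. A directed set is cofinite if every element has only finitely many predecessors. A $J$-morphism $(f,f^j_\mu):\boldsymbol{X}\to\boldsymbol{Y}=(Y_\mu,q_{\mu\mu'},M)$: a function $f:M\to\Lambda$ and $\mathcal{C}$-morphisms $f^j_\mu:X_{f(\mu)}\to Y_\mu$ ($\mu\in M$, $j\in J$) such that for all $\mu\le\mu'$ there exist $\lambda\ge f(\mu),f(\mu')$ and $j_0$ with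 $f^{j'}_\mu p_{f(\mu)\lambda}=q_{\mu\mu'}f^{j'}_{\mu'}p_{f(\mu')\lambda}$ for all $j'\ge j_0$. Composition $(g,g^j_\nu)(f,f^j_\mu)=(fg,g^j_\nu f^j_{g(\nu)})$, identity $(1_\Lambda,1_{X_\lambda})$. $(f,f^j_\mu)\sim(f',f'^j_\mu)$ iff for every $\mu$ there exist $\lambda\ge f(\mu),f'(\mu)$ and $j_0$ with $f^{j'}_\mu p_{f(\mu)\lambda}=f'^{j'}_\mu p_{f'(\mu)\lambda}$ for all $j'\ge j_0$. $pro^J$-$\mathcal{C}$ is the quotient category. A level $J$-morphism has $M=\Lambda$, $f=1_\Lambda$. *)

From Stdlib Require Import List.
Set Implicit Arguments.

Record Category := {
  Ob :> Type;
  Hom : Ob -> Ob -> Type;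
  comp : forall a b e : Ob, Hom b e -> Hom a b -> Hom a e;
  idm : forall a : Ob, Hom a a;
  comp_assoc : forall a b c d (h : Hom c d) (g : Hom b c) (f : Hom a b),
      comp h (comp g f) = comp (comp h g) f;
  comp_id_l : forall a b (f : Hom a b), comp (idm b) f = f;
  comp_id_r : forall a b (f : Hom a b), comp f (idm a) = f
}.
Arguments Hom {_} _ _.
Arguments comp {_ _ _ _} _ _.
Arguments idm {_} _.

Record DirSet := {
  dcar :> Type;
  dle : dcar -> dcar -> Prop;
  dle_refl : forall x, dle x x;
  dle_trans : forall x y z, dle x y -> dle y z -> dle x z;
  dinhabited : inhabited dcar;
  ddirected : forall x y, exists z, dle x z /\ dle y z
}.
Arguments dle {d} _ _.

Definition antisymmetric (D : DirSet) : Prop :=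
  forall x y : D, dle x y -> dle y x -> x = y.

Definition cofinite (D : DirSet) : Prop :=
  forall x : D, exists l : list D, forall y : D, dle y x -> In y l.

Record InvSys (C : Category) (L : DirSet) := {
  iobj :> L -> Ob C;
  ibond : forall l l' : L, dle l l' -> Hom (iobj l') (iobj l);
  ibond_id : forall l (h : dle l l), ibond l l h = idm (iobj l);
  ibond_comp : forall l l' l'' (h1 : dle l l') (h2 : dle l' l'') (h3 : dle l l''),
      comp (ibond l l' h1) (ibond l' l'' h2) = ibond l l'' h3
}.
Arguments iobj {C L} _ _.
Arguments ibond {C L} _ {l l'} _.

Section ProJ.
Variables (C : Category) (J : DirSet).

Record JData (L M : DirSet) (X : InvSys C L) (Y : InvSys C M) := {
  jfun : M -> L;
  jmor : J -> forall mu : M, Hom (X (jfun mu)) (Y mu)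
}.
Arguments jfun {L M X Y} _ _.
Arguments jmor {L M X Y} _ _ _.

Definition IsJMor L M (X : InvSys C L) (Y : InvSys C M) (f : JData X Y) : Prop :=
  forall (mu mu' : M) (h : dle mu mu'),
  exists (l : L) (h1 : dle (jfun f mu) l) (h2 : dle (jfun f mu') l) (j0 : J),
    forall j' : J, dle j0 j' ->
      comp (jmor f j' mu) (ibond X h1)
      = comp (ibond Y h) (comp (jmor f j' mu') (ibond X h2)).

Definition jcomp L M K (X : InvSys C L) (Y : InvSys C M) (Z : InvSys C K)
    (g : JData Y Z) (f : JData X Y) : JData X Z :=
  {| jfun := fun nu => jfun f (jfun g nu);
     jmor := fun j nu => comp (jmor g j nu) (jmor f j (jfun g nu)) |}.

Definition jid L (X : InvSys C L) : JData X X :=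
  {| jfun := fun l => l; jmor := fun _ l => idm (X l) |}.

Definition jlevel N (X Y : InvSys C N) (fm : J -> forall nu : N, Hom (X nu) (Y nu))
    : JData X Y :=
  {| jfun := fun nu => nu; jmor := fm |}.

Definition jequiv L M (X : InvSys C L) (Y : InvSys C M) (f f' : JData X Y) : Prop :=
  forall mu : M,
  exists (l : L) (h1 : dle (jfun f mu) l) (h2 : dle (jfun f' mu) l) (j0 : J),
    forall j' : J, dle j0 j' ->
      comp (jmor f j' mu) (ibond X h1) = comp (jmor f' j' mu) (ibond X h2).

Definition IsJIso L M (X : InvSys C L) (Y : InvSys C M) (f : JData X Y) : Prop :=
  IsJMor f /\
  exists g : JData Y X, IsJMor g /\
    jequiv (jcomp g f) (jid X) /\ jequiv (jcomp f g) (jid Y).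

End ProJ.

(* Reindex both systems by the directed set of finite binary trees with leaves
   in M x L, ordered by the subtree relation: a tree has finitely many
   subtrees, so this set is cofinite.  Choosing upper bounds recursively along
   a tree t gives monotone indices a t in M and b t in L with f (a t) <= b t,
   and both maps are cofinal (leaves hit every index).  Pulling X back along b
   and Y along a therefore yields systems isomorphic to X and Y in pro^J-C, and
   f^j_(a t) composed with the bonding map X_(b t) -> X_(f (a t)) is a level
   representative of the transported morphism. *)
From Stdlib Require Import List ClassicalEpsilon.
Set Implicit Arguments.

Definition ub (D : DirSet) (x y : D) : D :=
  proj1_sig (constructive_indefinite_description _ (ddirected D x y)).
Arguments ub {D} x y.

Lemma ub_l {D : DirSet} (x y : D) : dle x (ub x y).
Proof. unfold ub; destruct (constructive_indefinite_description _ _) as [z [? ?]]; auto. Qed.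

Lemma ub_r {D : DirSet} (x y : D) : dle y (ub x y).
Proof. unfold ub; destruct (constructive_indefinite_description _ _) as [z [? ?]]; auto. Qed.

Lemma ibond_irrelevant C (D : DirSet) (Z : InvSys C D) {x y : D} (h h' : dle x y) :
  ibond Z h = ibond Z h'.
Proof.
  rewrite <- (comp_id_r C _ _ (ibond Z h)), <- (ibond_id Z y (dle_refl _ y)).
  apply ibond_comp.
Qed.

Lemma ibond_comp_trans C (D : DirSet) (Z : InvSys C D) {x y z : D}
    (hxy : dle x y) (hyz : dle y z) :
  comp (ibond Z hxy) (ibond Z hyz) = ibond Z (dle_trans _ _ _ _ hxy hyz).
Proof. apply ibond_comp. Qed.

Section Reindexing.
Variables (C : Category) (J : DirSet).

Definition reindex {D N : DirSet} (Z : InvSys C D) (r : N -> D)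
    (rmono : forall x y : N, dle x y -> dle (r x) (r y)) : InvSys C N.
Proof.
  refine {| iobj := fun n => Z (r n); ibond := fun x y h => ibond Z (rmono x y h) |}.
  - intros; apply ibond_id.
  - intros; apply ibond_comp.
Defined.

Definition reindex_proj {D N : DirSet} (Z : InvSys C D) (r : N -> D) rmono
    : JData J Z (reindex Z r rmono) :=
  @Build_JData C J D N Z (reindex Z r rmono) r (fun _ nu => idm (Z (r nu))).

Lemma reindex_proj_iso (D N : DirSet) (Z : InvSys C D) (r : N -> D)
    (rmono : forall x y : N, dle x y -> dle (r x) (r y))
    (s : D -> N) (hs : forall d, dle d (r (s d))) :
  IsJIso (reindex_proj Z r rmono).
Proof.
  destruct (dinhabited J) as [j0].
  split.
  - intros nu nu' h. exists (r nu'), (rmono _ _ h), (dle_refl _ _), j0.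
    intros; simpl. rewrite ?ibond_id, ?comp_id_l, ?comp_id_r. reflexivity.
  - exists (@Build_JData C J N D (reindex Z r rmono) Z s (fun _ d => ibond Z (hs d))).
    split; [|split].
    + intros d d' h. destruct (ddirected _ (s d) (s d')) as [n [h1 h2]].
      exists n, h1, h2, j0. intros; simpl.
      rewrite !ibond_comp_trans. apply ibond_irrelevant.
    + intro d. exists (r (s d)), (dle_refl _ _), (hs d), j0. intros; simpl.
      rewrite ?ibond_id, ?comp_id_l, ?comp_id_r. reflexivity.
    + intro nu. destruct (ddirected _ (s (r nu)) nu) as [n [h1 h2]].
      exists n, h1, h2, j0. intros; simpl.
      rewrite !comp_id_l, ibond_comp_trans. apply ibond_irrelevant.
Qed.

End Reindexing.
Arguments reindex_proj_iso {C} J {D N} Z {r} rmono s hs.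

Section LevelRepresentative.
Variables (C : Category) (J L M N : DirSet) (X : InvSys C L) (Y : InvSys C M).
Variables (f : JData J X Y) (a : N -> M) (b : N -> L).
Hypothesis amono : forall x y : N, dle x y -> dle (a x) (a y).
Hypothesis bmono : forall x y : N, dle x y -> dle (b x) (b y).
Hypothesis hab : forall nu, dle (jfun f (a nu)) (b nu).

Let X' := reindex X b bmono.
Let Y' := reindex Y a amono.

Definition level_rep (j : J) (nu : N) : Hom (X' nu) (Y' nu) :=
  comp (jmor f j (a nu)) (ibond X (hab nu)).

Lemma level_rep_isJMor (sb : L -> N) (hsb : forall l, dle l (b (sb l))) :
  IsJMor f -> IsJMor (jlevel J X' Y' level_rep).
Proof.
  intros Hf nu nu' h.
  destruct (Hf (a nu) (a nu') (amono _ _ h)) as [l [h1 [h2 [j1 Hl]]]].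
  destruct (ddirected _ nu' (sb l)) as [n [hn hln]].
  assert (hl : dle l (b n)) by exact (dle_trans _ _ _ _ (hsb l) (bmono _ _ hln)).
  exists n, (dle_trans _ _ _ _ h hn), hn, j1. intros j' hj; simpl; unfold level_rep.
  (* both sides factor through the bonding map X_(b n) -> X_l *)
  rewrite <- !(comp_assoc C), !ibond_comp_trans.
  rewrite (ibond_irrelevant X _ (dle_trans _ _ _ _ h1 hl)),
          (ibond_irrelevant X _ (dle_trans _ _ _ _ h2 hl)), <- !ibond_comp_trans.
  rewrite !(comp_assoc C), (Hl j' hj), !(comp_assoc C). reflexivity.
Qed.

Lemma level_rep_square :
  jequiv (jcomp (reindex_proj J Y a amono) f)
         (jcomp (jlevel J X' Y' level_rep) (reindex_proj J X b bmono)).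
Proof.
  destruct (dinhabited J) as [j0].
  intro nu. exists (b nu), (hab nu), (dle_refl _ _), j0. intros; simpl.
  rewrite ?ibond_id, ?comp_id_l, ?comp_id_r. reflexivity.
Qed.

End LevelRepresentative.
Arguments level_rep {C J L M N X Y} f {a b} amono bmono hab j nu.
Arguments level_rep_isJMor {C J L M N X Y f a b} amono bmono hab sb hsb.
Arguments level_rep_square {C J L M N X Y} f {a b} amono bmono hab.

Inductive tree (L M : Type) :=
| Leaf : M -> L -> tree L M
| Node : tree L M -> tree L M -> tree L M.
Arguments Leaf {L M} _ _.
Arguments Node {L M} _ _.

Inductive subtree {L M : Type} : tree L M -> tree L M -> Prop :=
| subtree_refl t : subtree t t
| subtree_node_l t u v : subtree t u -> subtree t (Node u v)
| subtree_node_r t u v : subtree t v -> subtree t (Node u v).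

Lemma subtree_trans (L M : Type) (t u v : tree L M) :
  subtree t u -> subtree u v -> subtree t v.
Proof. intros Htu Huv; induction Huv; auto using subtree_node_l, subtree_node_r. Qed.

Fixpoint subtrees (L M : Type) (t : tree L M) : list (tree L M) :=
  match t with
  | Leaf m l => Leaf m l :: nil
  | Node u v => Node u v :: subtrees u ++ subtrees v
  end.

Lemma in_subtrees (L M : Type) (t u : tree L M) : subtree u t -> In u (subtrees t).
Proof.
  intro H; induction H; simpl.
  - destruct t; simpl; auto.
  - right; apply in_or_app; auto.
  - right; apply in_or_app; auto.
Qed.

Definition tree_dirSet (L M : DirSet) : DirSet.
Proof.
  refine {| dcar := tree L M; dle := @subtree L M; dle_refl := @subtree_refl L M;
            dle_trans := @subtree_trans L M |}.
  - destruct (dinhabited M) as [m], (dinhabited L) as [l].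
    exact (inhabits (Leaf m l)).
  - intros t u. exists (Node t u).
    split; [apply subtree_node_l | apply subtree_node_r]; apply subtree_refl.
Defined.

Lemma tree_cofinite (L M : DirSet) : cofinite (tree_dirSet L M).
Proof. intro t. exists (subtrees t). apply in_subtrees. Qed.

Section TreeIndices.
Variables (L M : DirSet) (fj : M -> L).

Fixpoint index_M (t : tree L M) : M :=
  match t with
  | Leaf m _ => m
  | Node u v => ub (index_M u) (index_M v)
  end.

Fixpoint index_L (t : tree L M) : L :=
  match t with
  | Leaf m l => ub (fj m) l
  | Node u v => ub (ub (index_L u) (index_L v)) (fj (ub (index_M u) (index_M v)))
  end.

Lemma index_M_mono (t u : tree_dirSet L M) : dle t u -> dle (index_M t) (index_M u).
Proof.
  intro H; induction H; simpl.
  - apply dle_refl.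
  - exact (dle_trans _ _ _ _ IHsubtree (ub_l _ _)).
  - exact (dle_trans _ _ _ _ IHsubtree (ub_r _ _)).
Qed.

Lemma index_L_mono (t u : tree_dirSet L M) : dle t u -> dle (index_L t) (index_L u).
Proof.
  intro H; induction H; simpl.
  - apply dle_refl.
  - exact (dle_trans _ _ _ _ IHsubtree (dle_trans _ _ _ _ (ub_l _ _) (ub_l _ _))).
  - exact (dle_trans _ _ _ _ IHsubtree (dle_trans _ _ _ _ (ub_r _ _) (ub_l _ _))).
Qed.

Lemma fj_index_le (t : tree L M) : dle (fj (index_M t)) (index_L t).
Proof. destruct t; simpl; [apply ub_l | apply ub_r]. Qed.

End TreeIndices.

Theorem theorem2 (C : Category) (J : DirSet) (HJ : antisymmetric J)
    (L M : DirSet) (X : InvSys C L) (Y : InvSys C M) (f : JData J X Y) :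
  IsJMor f ->
  exists (N : DirSet) (X' Y' : InvSys C N)
         (fm : J -> forall nu : N, Hom (X' nu) (Y' nu))
         (i : JData J X X') (j : JData J Y Y'),
    cofinite N /\
    IsJMor (jlevel J X' Y' fm) /\
    IsJIso i /\ IsJIso j /\
    jequiv (jcomp j f) (jcomp (jlevel J X' Y' fm) i).
Proof.
  intro Hf.
  destruct (dinhabited M) as [m0], (dinhabited L) as [l0].
  pose proof (@index_M_mono L M) as amono.
  pose proof (@index_L_mono L M (jfun f)) as bmono.
  pose proof (@fj_index_le L M (jfun f)) as hab.
  exists (tree_dirSet L M), (reindex X _ bmono), (reindex Y _ amono),
    (level_rep f amono bmono hab), (reindex_proj J X _ bmono), (reindex_proj J Y _ amono).
  set (leaf_over_L := fun l : L => Leaf m0 l : tree_dirSet L M).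
  set (leaf_over_M := fun m : M => Leaf m l0 : tree_dirSet L M).
  split; [apply tree_cofinite|]. split; [|split; [|split]].
  - apply (level_rep_isJMor amono bmono hab leaf_over_L); [intro; apply ub_r | exact Hf].
  - apply (reindex_proj_iso J X bmono leaf_over_L). intro; apply ub_r.
  - apply (reindex_proj_iso J Y amono leaf_over_M). intro; apply dle_refl.
  - apply level_rep_square.
Qed.
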